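(* Let $G$ be a $k$-regular graph such that $\overline{G}$ is Helly, and let $T$ be a cotriangle in $G$. Then there are at least $k$ vertices of $G$ that are adjacent to $T$.
   Context: All graphs are finite and simple. A clique is a maximal set of pairwise adjacent vertices. A collection of sets has the Helly property if every subcollection whose members pairwise intersect has nonempty total intersection. A graph is Helly if its collection of cliques has the Helly property. A cotriangle in $G$ is an independent set of three vertices of $G$. A vertex $x$ of $G$ is adjacent to a cotriangle $T$ if $x$ is adjacent in $G$ to at least two vertices of $T$. *)

From mathcomp Require Import all_boot.
Set Implicit Arguments. Unset Strict Implicit. Unset Printing Implicit Defensive.

Definition simple_graph (T : finType) (e : rel T) : Prop :=
  irreflexive e /\ symmetric e.

Definition compl_rel (T : finType) (e : rel T) : rel T :=
  fun x y => (x != y) && ~~ e x y.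

Definition nbhd (T : finType) (e : rel T) (x : T) : {set T} := [set y | e x y].
Definition regular (T : finType) (e : rel T) (k : nat) : Prop :=
  forall x : T, #|nbhd e x| = k.

Definition is_complete_set (T : finType) (e : rel T) (A : {set T}) : bool :=
  [forall x in A, forall y in A, (x != y) ==> e x y].
Definition is_clique (T : finType) (e : rel T) (A : {set T}) : bool :=
  maxset (is_complete_set e) A.

Definition helly (T : finType) (C : {set {set T}}) : Prop :=
  forall F : {set {set T}}, F \subset C ->
    (forall A B, A \in F -> B \in F -> A :&: B != set0) ->
    \bigcap_(A in F) A != set0.

Definition helly_graph (T : finType) (e : rel T) : Prop :=
  helly [set A : {set T} | is_clique e A].

Definition cotriangle (T : finType) (e : rel T) (S : {set T}) : Prop :=
  #|S| = 3 /\ forall x y, x \in S -> y \in S -> ~~ e x y.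

Definition adjacent_to (T : finType) (e : rel T) (S : {set T}) (x : T) : bool :=
  2 <= #|[set y in S | e x y]|.

From mathcomp Require Import all_boot.
From mathcomp Require Import zify.
Set Implicit Arguments. Unset Strict Implicit. Unset Printing Implicit Defensive.

(* Call a clique of the complement "heavy" if it contains two vertices of the
   cotriangle T.  Two heavy cliques share a vertex of T, so by the Helly
   property of the complement some vertex u lies in all of them.  Every
   neighbour y of u is then adjacent to T: otherwise y and two of its
   non-neighbours in T form an independent set of G, which extends to a heavy
   clique of the complement containing both y and u, although u y is an edge
   of G.  Hence the k neighbours of u are all adjacent to T. *)

Lemma setI_neq0_of_traces (T : finType) (A B S : {set T}) :
  #|S| < #|A :&: S| + #|B :&: S| -> A :&: B != set0.
Proof.
move=> big; apply/set0Pn.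
have /card_gt0P[x] : 0 < #|(A :&: S) :&: (B :&: S)|.
  have sub : (A :&: S) :|: (B :&: S) \subset S.
    by apply/subsetP => x; rewrite !inE => /orP[] /andP[].
  move: (subset_leq_card sub); rewrite cardsU; lia.
by rewrite !inE => /andP[/andP[xA _] /andP[xB _]]; exists x; rewrite inE xA xB.
Qed.

Lemma card_sep_compl (T : finType) (S : {set T}) (p : pred T) :
  #|[set z in S | p z]| + #|[set z in S | ~~ p z]| = #|S|.
Proof.
rewrite -(cardsID [set z in S | p z] S); congr addn; apply: eq_card => z.
  by rewrite !inE andbA andbb.
by rewrite !inE; case: (z \in S); rewrite ?andbT ?andbF.
Qed.

Lemma complete_complP (T : finType) (e : rel T) (A : {set T}) :
  reflect {in A &, forall x y, x != y -> ~~ e x y}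
          (is_complete_set (compl_rel e) A).
Proof.
apply: (iffP forallP) => [hA x y xA yA xy | hA x].
  by move: (hA x); rewrite xA => /forallP/(_ y); rewrite yA xy => /andP[].
apply/implyP => xA; apply/forallP => y; apply/implyP => yA.
by apply/implyP => xy; rewrite /compl_rel xy hA.
Qed.

Section HeavyCliques.

Variables (T : finType) (e : rel T) (S : {set T}).
Hypothesis e_sym : symmetric e.
Hypothesis S_cotriangle : cotriangle e S.

Definition heavy_cliques : {set {set T}} :=
  [set K | is_clique (compl_rel e) K & 1 < #|K :&: S|].

Lemma heavy_cliques_meet A B :
  A \in heavy_cliques -> B \in heavy_cliques -> A :&: B != set0.
Proof.
rewrite !inE => /andP[_ hA] /andP[_ hB]; apply: (@setI_neq0_of_traces _ _ _ S).
by case: S_cotriangle => -> _; lia.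
Qed.

Lemma heavy_cliques_common_vertex :
  helly_graph (compl_rel e) -> exists u, forall K, K \in heavy_cliques -> u \in K.
Proof.
move=> hel.
have sub : heavy_cliques \subset [set A | is_clique (compl_rel e) A].
  by apply/subsetP => K; rewrite !inE => /andP[].
have /set0Pn[u /bigcapP uK] := hel _ sub heavy_cliques_meet.
by exists u.
Qed.

Lemma two_nonneighbours_in_cotriangle y :
  ~~ adjacent_to e S y -> 1 < #|[set z in S | ~~ e y z]|.
Proof.
have := card_sep_compl S (e y); case: S_cotriangle => -> _.
by rewrite /adjacent_to; lia.
Qed.

Lemma nonadjacent_in_heavy_clique y :
  ~~ adjacent_to e S y -> exists2 K, K \in heavy_cliques & y \in K.
Proof.
case: S_cotriangle => _ indS.
move/two_nonneighbours_in_cotriangle/card_gt1P => [y1 [y2 []]].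
rewrite !inE => /andP[y1S ey1] /andP[y2S ey2] y12.
have indep : is_complete_set (compl_rel e) [set y; y1; y2].
  apply/complete_complP => a b; rewrite !inE.
  move=> /orP[/orP[]|] /eqP-> /orP[/orP[]|] /eqP->; rewrite ?eqxx // => _;
    by [apply: indS | rewrite e_sym].
have [K maxK subK] := maxset_exists indep.
have inK z : z \in [set y; y1; y2] -> z \in K by apply: (subsetP subK).
exists K; last by rewrite inK // !inE eqxx.
rewrite inE /is_clique maxK; apply/card_gt1P; exists y1, y2.
by rewrite !inE y1S y2S !inK ?inE ?eqxx ?orbT.
Qed.

End HeavyCliques.

Theorem mainTheorem4 (T : finType) (e : rel T) (k : nat) (S : {set T}) :
  simple_graph e -> regular e k -> helly_graph (compl_rel e) ->
  cotriangle e S ->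
  k <= #|[set x : T | adjacent_to e S x]|.
Proof.
move=> [irr sym] reg hel cotri.
have [u u_heavy] := heavy_cliques_common_vertex cotri hel.
rewrite -(reg u); apply/subset_leq_card/subsetP => y; rewrite !inE => euy.
apply: contraT => /(nonadjacent_in_heavy_clique sym cotri) [K /[dup] KH].
rewrite inE => /andP[/maxsetp /complete_complP cK _] yK.
have uy : u != y by apply: contraTneq euy => ->; rewrite irr.
by move: (cK u y (u_heavy K KH) yK uy); rewrite euy.
Qed.
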